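(* Let $r\ge1$, $\mathbb{K}=\mathbb{F}_{2^r}$, and let $\mathcal{L}\subseteq\mathbb{F}_2^{N\times N}$ be a linear subspace. If $A\in\mathcal{L}\otimes_{\mathbb{F}_2}\mathbb{K}$ is nonzero and $\operatorname{rank}_{\mathbb{K}}(A)\le k$, then there exists a nonzero $B\in\mathcal{L}$ with $\operatorname{rank}_{\mathbb{F}_2}(B)\le rk$.
   Context: $\mathcal{L}\otimes_{\mathbb{F}_2}\mathbb{K}$ is identified with the $\mathbb{K}$-linear span of $\mathcal{L}$ inside $\mathbb{K}^{N\times N}$ (equivalently, the set of solutions over $\mathbb{K}$ of the homogeneous $\mathbb{F}_2$-linear equations defining $\mathcal{L}$). *)

From HB Require Import structures.
From mathcomp Require Import all_boot all_order all_algebra all_field.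
Set Implicit Arguments. Unset Strict Implicit. Unset Printing Implicit Defensive.
Import GRing.Theory.
Local Open Scope ring_scope.

Definition f2K (K : fieldType) (x : 'F_2) : K := (nat_of_ord x)%:R.

(* L (x)_{F_2} K, identified with the K-linear span of L inside K^{N x N}:
   A is a finite K-linear combination of (images of) elements of L. *)
Definition in_tensor (K : fieldType) (N : nat) (L : {vspace 'M['F_2]_N})
    (A : 'M[K]_N) : Prop :=
  exists s : seq ('M['F_2]_N * K),
    all (fun p => p.1 \in L) s /\
    A = \sum_(p <- s) p.2 *: map_mx (@f2K K) p.1.

(* Let Tr x = x + x ^ 2 + ... + x ^ (2 ^ (r - 1)) be the trace of K over F_2.
   Tr is F_2-linear with values in F_2, so applying it entrywise to y A, for A
   in L (x) K, gives (the image in K of) a matrix B in L; choosing y with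
   Tr (y A_ab) <> 0 makes B nonzero. Over K, Tr (y A) is the sum of the r
   Frobenius twists of y A, each of the same rank as y A, so rank B <= r k. *)

From HB Require Import structures.
From mathcomp Require Import all_boot all_order all_algebra all_field.
Set Implicit Arguments. Unset Strict Implicit. Unset Printing Implicit Defensive.
Import GRing.Theory.
Local Open Scope ring_scope.

Section F2Embedding.
Variables (K : fieldType) (chK2 : 2 \in [pchar K]).

Lemma f2KD : {morph f2K K : x y / x + y}.
Proof. by move=> x y; rewrite /f2K /= GRing.natr_mod_pchar // natrD. Qed.

Lemma f2KM : {morph f2K K : x y / x * y}.
Proof. by move=> x y; rewrite /f2K /= GRing.natr_mod_pchar // natrM. Qed.

Definition f2K_rmorphism : {rmorphism 'F_2 -> K} :=
  HB.pack (f2K K) (GRing.isNmodMorphism.Build _ _ _ (conj (erefl : f2K K 0 = 0) f2KD))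
    (GRing.isMonoidMorphism.Build _ _ _ (conj (erefl : f2K K 1 = 1) f2KM)).

End F2Embedding.

Lemma f2K_expr2 (K : fieldType) (e : 'F_2) : f2K K e ^+ 2 = f2K K e.
Proof. by case: e => [[|[|//]] ?]; rewrite /f2K ?expr0n ?expr1n. Qed.

Lemma f2K_of_idem (K : fieldType) (x : K) : x ^+ 2 = x -> exists e : 'F_2, f2K K e = x.
Proof.
move=> x2x; have : x * (x - 1) == 0 by rewrite mulrBr mulr1 -expr2 x2x subrr.
by rewrite mulf_eq0 subr_eq0 => /orP[]/eqP ->; [exists 0 | exists 1].
Qed.

Section FrobeniusTrace.
Variables (R : comNzRingType) (p : nat).
Hypothesis chRp : p \in [pchar R].

Definition frob_trace (r : nat) (x : R) : R := \sum_(i < r) x ^+ (p ^ i).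

Lemma frob_trace0 r : frob_trace r 0 = 0.
Proof.
rewrite /frob_trace big1 // => i _.
by rewrite expr0n expn_eq0 gtn_eqF // prime_gt0 // (pcharf_prime chRp).
Qed.

Lemma frob_traceD r : {morph frob_trace r : x y / x + y}.
Proof.
move=> x y; rewrite /frob_trace -big_split; apply: eq_bigr => i _.
by rewrite exprDn_pchar // pnatX (pnatE _ (pcharf_prime chRp)) chRp.
Qed.

Lemma frob_traceMr r x a : a ^+ p = a -> frob_trace r (x * a) = frob_trace r x * a.
Proof.
move=> apa; rewrite /frob_trace mulr_suml; apply: eq_bigr => i _.
rewrite exprMn; congr (_ * _).
by elim: (i : nat) => // n IHn; rewrite expnSr exprM IHn apa.
Qed.

End FrobeniusTrace.

Section FiniteFieldTrace.
Variables (K : finFieldType) (p r : nat).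
Hypotheses (p_pr : prime p) (cardK : #|K| = (p ^ r)%N).

Let chKp : p \in [pchar K] := card_finPcharP cardK p_pr.

Lemma frob_trace_pfixed (x : K) : frob_trace p r x ^+ p = frob_trace p r x.
Proof.
rewrite /frob_trace -[LHS](pFrobenius_autE chKp) rmorph_sum /=.
under eq_bigr do rewrite pFrobenius_autE -exprM -expnSr.
case: r cardK => [|r'] cardK'; first by rewrite !big_ord0.
rewrite big_ord_recr big_ord_recl /= -cardK' expf_card expn0 expr1 addrC.
by congr (_ + _); apply: eq_bigr.
Qed.

Lemma frob_trace_neq0 : exists z : K, frob_trace p r z != 0.
Proof.
have p_gt1 := prime_gt1 p_pr.
have [r' r_eq] : exists r', r = r'.+1.
  case: r cardK => [cardK1|r' _]; last by exists r'.
  by have := card_finNzRing_gt1 K; rewrite cardK1.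
pose P : {poly K} := \sum_(i < r) 'X^(p ^ i).
have P_eval z : P.[z] = frob_trace p r z.
  by rewrite horner_sum; apply: eq_bigr => i _; rewrite hornerXn.
have P_neq0 : P != 0.
  apply/eqP => /(congr1 (fun q : {poly K} => q`_1)) /eqP; apply/negP.
  rewrite coef0 coef_sum r_eq big_ord_recl coefXn big1 ?addr0 ?oner_eq0 // => i _.
  by rewrite coefXn (eqn_exp2l 0 i.+1 p_gt1).
have /allPn[z _] : ~~ all (root P) (enum K).
  apply: contra P_neq0 => /roots_geq_poly_eq0 -> //; first exact: enum_uniq.
  rewrite -cardE cardK; apply: leq_trans (size_sum _ _ _) _.
  by apply/bigmax_leqP => i _; rewrite size_polyXn ltn_exp2l.
by rewrite /root P_eval; exists z.
Qed.

End FiniteFieldTrace.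

Lemma mxrank_sum (F : fieldType) (I : Type) (s : seq I) (P : pred I) m n
    (M : I -> 'M[F]_(m, n)) :
  (\rank (\sum_(i <- s | P i) M i)%R <= \sum_(i <- s | P i) \rank (M i))%N.
Proof.
apply: (big_ind2 (fun (A : 'M_(m, n)) k => \rank A <= k)%N) => //.
  by rewrite mxrank0.
by move=> A1 k1 A2 k2 rk1 rk2; apply: leq_trans (mxrank_add _ _) (leq_add rk1 rk2).
Qed.

Section FrobeniusRank.
Variables (F : fieldType) (p : nat).
Hypothesis chFp : p \in [pchar F].

Lemma mxrank_map_expn m n e (M : 'M[F]_(m, n)) :
  \rank (map_mx (fun x => x ^+ (p ^ e)) M) = \rank M.
Proof.
elim: e => [|e IHe]; first by rewrite map_mx_id // => x; rewrite expn0 expr1.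
suff -> : map_mx (fun x => x ^+ (p ^ e.+1)) M =
    map_mx (pFrobenius_aut chFp) (map_mx (fun x => x ^+ (p ^ e)) M).
  by rewrite mxrank_map IHe.
by apply/matrixP => i j; rewrite !mxE pFrobenius_autE -exprM expnSr.
Qed.

Lemma mxrank_frob_trace r m n (M : 'M[F]_(m, n)) :
  (\rank (map_mx (frob_trace p r) M) <= r * \rank M)%N.
Proof.
have -> : map_mx (frob_trace p r) M = \sum_(i < r) map_mx (fun x => x ^+ (p ^ i)) M.
  by apply/matrixP => i j; rewrite mxE summxE; apply: eq_bigr => l _; rewrite mxE.
apply: leq_trans (mxrank_sum _ _ _) _.
by under eq_bigr do rewrite mxrank_map_expn; rewrite sum_nat_const card_ord.
Qed.

End FrobeniusRank.

Lemma in_tensorZ (K : fieldType) N (L : {vspace 'M['F_2]_N}) (c : K) (A : 'M[K]_N) :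
  in_tensor L A -> in_tensor L (c *: A).
Proof.
case=> s [sL ->]; exists [seq (q.1, c * q.2) | q <- s]; split; first by rewrite all_map.
by rewrite big_map scaler_sumr; apply: eq_bigr => q _; rewrite scalerA.
Qed.

Lemma in_tensor_frob_trace (K : finFieldType) r N (L : {vspace 'M['F_2]_N})
    (A : 'M[K]_N) :
  #|K| = (2 ^ r)%N -> in_tensor L A ->
  exists2 B, B \in L & map_mx (f2K K) B = map_mx (frob_trace 2 r) A.
Proof.
move=> cardK [s [sL ->]] {A}.
have chK2 : 2 \in [pchar K] := card_finPcharP cardK isT.
elim: s sL => [_|[P c] s IHs /= /andP[PL /IHs[B BL BE]]].
  exists 0; first exact: mem0v.
  by apply/matrixP => i j; rewrite !mxE summxE big_nil frob_trace0.
have [e ec] := f2K_of_idem (frob_trace_pfixed (isT : prime 2) cardK c).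
exists (e *: P + B); first by rewrite rpredD ?rpredZ.
apply/matrixP => i j; move/matrixP: BE => /(_ i j).
rewrite !mxE big_cons !mxE /= summxE => BE.
by rewrite f2KD // f2KM // BE frob_traceD // frob_traceMr ?f2K_expr2 // ec.
Qed.

Unset Implicit Arguments. Set Strict Implicit.

Theorem lemma3p12 (r : nat) (K : finFieldType) (N k : nat)
    (L : {vspace 'M['F_2]_N}) (A : 'M[K]_N) :
  (1 <= r)%N -> #|K| = (2 ^ r)%N ->
  in_tensor L A -> A != 0 -> (\rank A <= k)%N ->
  exists2 B : 'M['F_2]_N, (B \in L) && (B != 0) & (\rank B <= r * k)%N.
Proof.
(* r >= 1 already follows from #|K| = 2 ^ r. *)
move=> _ cardK tA /matrix0Pn[a [b Aab]] rkA.
have chK2 : 2 \in [pchar K] := card_finPcharP cardK isT.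
have [z trz] := frob_trace_neq0 (isT : prime 2) cardK.
have [B BL BE] := in_tensor_frob_trace cardK (in_tensorZ (z / A a b) tA).
exists B.
  rewrite BL /=; apply: contraNneq trz => B0.
  by move/matrixP: BE => /(_ a b); rewrite B0 !mxE divfK // => <-.
rewrite -(mxrank_map (f2K_rmorphism chK2)) BE.
apply: leq_trans (mxrank_frob_trace chK2 _ _) _.
by rewrite leq_mul2l (leq_trans (mxrank_scale _ _) rkA) orbT.
Qed.
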